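(* Let $\epsilon>0$, and let $({\mathbf{x}}_1,{\mathbf{y}}_1,{\mathbf{y}}_2)\in\mathcal X_1\times\mathcal Y_1\times[0,B]^l$ be an $\epsilon$-KKT point of the reformulated problem $\min_{{\mathbf{x}}_1,{\mathbf{y}}_1,{\mathbf{y}}_2}\{f({\mathbf{x}}_1,{\mathbf{y}}_1):({\mathbf{y}}_1,{\mathbf{y}}_2)\text{ is a saddle point of }\tilde f({\mathbf{x}}_1,\cdot,\cdot)\}$ (as defined in the context) with associated penalty parameter $\rho\ge0$, and suppose $\epsilon\le\min\{\rho L_{\bar f}/4,\ \rho G\sqrt l/4\}$. Then $({\mathbf{x}}_1,{\mathbf{y}}_1)$ is an $O(\epsilon)$-KKT point of the constrained bilevel problem $\min_{{\mathbf{x}}_1,{\mathbf{y}}_1}\{f({\mathbf{x}}_1,{\mathbf{y}}_1): {\mathbf{y}}_1\in\arg\min_{{\mathbf{z}}_1}\{\bar f({\mathbf{x}}_1,{\mathbf{z}}_1):\bar{{\mathbf{g}}}({\mathbf{x}}_1,{\mathbf{z}}_1)\le0\}\}$.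
   Context: Setting: $f({\mathbf{x}}_1,{\mathbf{y}}_1)=f_1({\mathbf{x}}_1,{\mathbf{y}}_1)+f_2({\mathbf{x}}_1)$, $\bar f({\mathbf{x}}_1,{\mathbf{y}}_1)=\bar f_1({\mathbf{x}}_1,{\mathbf{y}}_1)+\bar f_2({\mathbf{y}}_1)$, $\bar{{\mathbf{g}}}=(\bar g_1,\dots,\bar g_l)$. Assumptions: $\mathcal X_1=\mathrm{dom} f_2$, $\mathcal Y_1=\mathrm{dom}\bar f_2$ compact; $f_1$ is $L_{\nabla f_1}$-smooth on $\mathcal X_1\times\mathcal Y_1$; $\bar f_1$ convex in ${\mathbf{y}}_1$ and $L_{\nabla\bar f_1}$-smooth; $\bar f$ is $L_{\bar f}$-Lipschitz on $\mathcal X_1\times\mathcal Y_1$; each $\bar g_i$ convex in ${\mathbf{y}}_1$, $\bar{{\mathbf{g}}}$ $L_{\nabla\bar{{\mathbf{g}}}}$-smooth and $L_{\bar{{\mathbf{g}}}}$-Lipschitz; $f_2,\bar f_2$ proper closed convex with exactly computable proximal operators; (Slater) there is $G>0$ such that for each ${\mathbf{x}}_1\in\mathcal X_1$ some $\hat{{\mathbf{y}}}_1\in\mathcal Y_1$ has $\bar g_i({\mathbf{x}}_1,\hat{{\mathbf{y}}}_1)\le-G$ for all $i$. $D_{\mathcal Y_1}$ = diameter of $\mathcal Y_1$, $B=2L_{\bar f}D_{\mathcal Y_1}/G$, $\tilde f({\mathbf{x}}_1,{\mathbf{z}}_1,{\mathbf{z}}_2)=\bar f({\mathbf{x}}_1,{\mathbf{z}}_1)+{\mathbf{z}}_2^\top\bar{{\mathbf{g}}}({\mathbf{x}}_1,{\mathbf{z}}_1)-\mathbf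 1_{[0,B]^l}({\mathbf{z}}_2)$. $\partial$ = Fréchet subdifferential. $\epsilon$-KKT point of the reformulated problem: $({\mathbf{x}}_1,{\mathbf{y}}_1,{\mathbf{y}}_2)$ such that there exist $\rho\ge0$ and $({\mathbf{z}}_1,{\mathbf{z}}_2)$ with $\mathrm{dist}(0,\partial_{({\mathbf{x}}_1,{\mathbf{y}}_1,{\mathbf{y}}_2)}[f({\mathbf{x}}_1,{\mathbf{y}}_1)+\rho(\tilde f({\mathbf{x}}_1,{\mathbf{y}}_1,{\mathbf{z}}_2)-\tilde f({\mathbf{x}}_1,{\mathbf{z}}_1,{\mathbf{y}}_2))])\le\epsilon$, $\mathrm{dist}(0,\rho\partial_{{\mathbf{z}}_1}\tilde f({\mathbf{x}}_1,{\mathbf{z}}_1,{\mathbf{y}}_2))\le\epsilon$, $\mathrm{dist}(0,\rho\partial_{{\mathbf{z}}_2}[-\tilde f({\mathbf{x}}_1,{\mathbf{y}}_1,{\mathbf{z}}_2)])\le\epsilon$, and $\max_{{\mathbf{z}}_2}\tilde f({\mathbf{x}}_1,{\mathbf{y}}_1,{\mathbf{z}}_2)-\min_{{\mathbf{z}}_1}\tilde f({\mathbf{x}}_1,{\mathbf{z}}_1,{\mathbf{y}}_2)\le\epsilon$. $\epsilon$-KKT point of the constrained bilevel problem: $({\mathbf{x}}_1,{\mathbf{y}}_1)$ such that there exist ${\mathbf{z}}_1\in\mathcal Y_1$, $\rho\ge0$, ${\bm\lambda},\bar{\bm\lambda}\in\mathbb R_+^l$ with $\mathrm{dist}(0,\partial_{({\mathbf{x}}_1,{\mathbf{y}}_1)}[f({\mathbf{x}}_1,{\mathbf{y}}_1)+\rho(\bar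 f({\mathbf{x}}_1,{\mathbf{y}}_1)-\bar f({\mathbf{x}}_1,{\mathbf{z}}_1)-\bar{\bm\lambda}^\top\bar{{\mathbf{g}}}({\mathbf{x}}_1,{\mathbf{z}}_1))+{\bm\lambda}^\top\bar{{\mathbf{g}}}({\mathbf{x}}_1,{\mathbf{y}}_1)])\le\epsilon$, $\mathrm{dist}(0,\rho\partial_{{\mathbf{z}}_1}[\bar f({\mathbf{x}}_1,{\mathbf{z}}_1)+\bar{\bm\lambda}^\top\bar{{\mathbf{g}}}({\mathbf{x}}_1,{\mathbf{z}}_1)])\le\epsilon$, $\|[\bar{{\mathbf{g}}}({\mathbf{x}}_1,{\mathbf{z}}_1)]_+\|\le\epsilon$, $|\bar{\bm\lambda}^\top\bar{{\mathbf{g}}}({\mathbf{x}}_1,{\mathbf{z}}_1)|\le\epsilon$, $\bar f({\mathbf{x}}_1,{\mathbf{y}}_1)-\bar f^*({\mathbf{x}}_1)\le\epsilon$, $\|[\bar{{\mathbf{g}}}({\mathbf{x}}_1,{\mathbf{y}}_1)]_+\|\le\epsilon$, $|{\bm\lambda}^\top\bar{{\mathbf{g}}}({\mathbf{x}}_1,{\mathbf{y}}_1)|\le\epsilon$, where $\bar f^*({\mathbf{x}}_1)=\min_{{\mathbf{y}}_1}\{\bar f({\mathbf{x}}_1,{\mathbf{y}}_1):\bar{{\mathbf{g}}}({\mathbf{x}}_1,{\mathbf{y}}_1)\le0\}$ and $[\cdot]_+=\max\{\cdot,0\}$ componentwise. $O(\epsilon)$ denotes a quantity at most a constant independent of $\epsilon$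 times $\epsilon$. *)

From HB Require Import structures.
From mathcomp Require Import all_boot all_order all_algebra.
From mathcomp Require Import all_classical all_reals all_analysis.
Set Implicit Arguments. Unset Strict Implicit. Unset Printing Implicit Defensive.
Import Order.TTheory GRing.Theory Num.Theory.
Local Open Scope classical_set_scope.
Local Open Scope ring_scope.

Section Defs.
Variable R : realType.

Definition vdot k (u v : 'rV[R]_k) : R := \sum_(i < k) u ord0 i * v ord0 i.
Definition vnorm k (u : 'rV[R]_k) : R := Num.sqrt (vdot u u).

Definition pos_part k (v : 'rV[R]_k) : 'rV[R]_k := \row_i Num.max (v ord0 i) 0.

Definition dom k (h : 'rV[R]_k -> \bar R) : set 'rV[R]_k :=
  [set x | (h x < +oo)%E].

Definition proper_fun k (h : 'rV[R]_k -> \bar R) : Prop :=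
  (forall x, h x <> -oo%E) /\ exists x, h x \is a fin_num.

(* closed = lower semicontinuous *)
Definition lsc_fun k (h : 'rV[R]_k -> \bar R) : Prop :=
  forall x (a : R), (a%:E < h x)%E ->
    exists2 d : R, 0 < d & forall y, vnorm (y - x) < d -> (a%:E < h y)%E.

Definition convex_fun k (h : 'rV[R]_k -> \bar R) : Prop :=
  forall (x y : 'rV[R]_k) (t : R), 0 < t < 1 ->
    (h (t *: x + (1 - t) *: y)%R <= t%:E * h x + (1 - t)%:E * h y)%E.

Definition is_gradient k (h : 'rV[R]_k -> R) (w gr : 'rV[R]_k) : Prop :=
  forall e : R, 0 < e -> exists2 d : R, 0 < d & forall w', vnorm (w' - w) < d ->
    `|h w' - h w - vdot gr (w' - w)| <= e * vnorm (w' - w).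

Definition smooth_on k (h : 'rV[R]_k -> R) (S : set 'rV[R]_k) (L : R) : Prop :=
  exists grad : 'rV[R]_k -> 'rV[R]_k,
    (forall w, S w -> is_gradient h w (grad w)) /\
    (forall w w', S w -> S w' -> vnorm (grad w - grad w') <= L * vnorm (w - w')).

(* Frechet differentiability of a vector map with Jacobian J at w
   (row-vector convention: g w' ~ g w + (w' - w) *m J) *)
Definition is_jacobian k p (g : 'rV[R]_k -> 'rV[R]_p) (w : 'rV[R]_k)
    (J : 'M[R]_(k, p)) : Prop :=
  forall e : R, 0 < e -> exists2 d : R, 0 < d & forall w', vnorm (w' - w) < d ->
    vnorm (g w' - g w - (w' - w) *m J) <= e * vnorm (w' - w).

Definition vsmooth_on k p (g : 'rV[R]_k -> 'rV[R]_p) (S : set 'rV[R]_k) (L : R) :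
    Prop :=
  exists J : 'rV[R]_k -> 'M[R]_(k, p),
    (forall w, S w -> is_jacobian g w (J w)) /\
    (forall w w', S w -> S w' -> forall u : 'rV[R]_k,
       vnorm (u *m (J w - J w')) <= L * vnorm (w - w') * vnorm u).

Definition vlipschitz_on k p (g : 'rV[R]_k -> 'rV[R]_p) (S : set 'rV[R]_k) (L : R) :
    Prop :=
  forall w w', S w -> S w' -> vnorm (g w - g w') <= L * vnorm (w - w').

Definition elipschitz_on k (h : 'rV[R]_k -> \bar R) (S : set 'rV[R]_k) (L : R) :
    Prop :=
  forall w w', S w -> S w' -> (`|h w - h w'| <= (L * vnorm (w - w'))%:E)%E.

Definition prod_set n m (X : set 'rV[R]_n) (Y : set 'rV[R]_m) : set 'rV[R]_(n + m) :=
  [set w | X (lsubmx w) /\ Y (rsubmx w)].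

Definition uncurry2 n m T (h : 'rV[R]_n -> 'rV[R]_m -> T) : 'rV[R]_(n + m) -> T :=
  fun w => h (lsubmx w) (rsubmx w).

Definition diam k (S : set 'rV[R]_k) : R :=
  sup [set r | exists y y', S y /\ S y' /\ r = vnorm (y - y')].

Definition box l (B : R) (z : 'rV[R]_l) : Prop := forall i, 0 <= z ord0 i <= B.
Definition ind_box l (B : R) (z : 'rV[R]_l) : \bar R :=
  if `[< box B z >] then 0%E else +oo%E.

Definition frechet_sub k (h : 'rV[R]_k -> \bar R) (x : 'rV[R]_k) (v : 'rV[R]_k) : Prop :=
  h x \is a fin_num /\
  forall e : R, 0 < e -> exists2 d : R, 0 < d & forall y, vnorm (y - x) < d ->
    ((fine (h x) + vdot v (y - x) - e * vnorm (y - x))%:E <= h y)%E.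

Definition scale_set k (rho : R) (S : set 'rV[R]_k) : set 'rV[R]_k :=
  [set w | exists2 v, S v & w = rho *: v].

(* dist(0, S) <= e  (dist = infimum of norms; +oo for the empty set) *)
Definition dist0_le k (S : set 'rV[R]_k) (e : R) : Prop :=
  forall d : R, 0 < d -> exists2 v, S v & vnorm v <= e + d.

Definition blk1 n m l (w : 'rV[R]_(n + (m + l))) : 'rV[R]_n := lsubmx w.
Definition blk2 n m l (w : 'rV[R]_(n + (m + l))) : 'rV[R]_m := lsubmx (rsubmx w).
Definition blk3 n m l (w : 'rV[R]_(n + (m + l))) : 'rV[R]_l := rsubmx (rsubmx w).

Section Problem.
Variables (n m l : nat).
Variables (f1 fb1 : 'rV[R]_n -> 'rV[R]_m -> R) (f2 : 'rV[R]_n -> \bar R)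
  (fb2 : 'rV[R]_m -> \bar R) (gb : 'rV[R]_n -> 'rV[R]_m -> 'rV[R]_l).

Definition fobj (x : 'rV[R]_n) (y : 'rV[R]_m) : \bar R := ((f1 x y)%:E + f2 x)%E.
Definition fbar (x : 'rV[R]_n) (y : 'rV[R]_m) : \bar R := ((fb1 x y)%:E + fb2 y)%E.

Definition ftilde (B : R) (x : 'rV[R]_n) (z1 : 'rV[R]_m) (z2 : 'rV[R]_l) : \bar R :=
  (fbar x z1 + (vdot z2 (gb x z1))%:E - ind_box B z2)%E.

Definition ref_kkt (B eps rho : R) (x : 'rV[R]_n) (y1 : 'rV[R]_m) (y2 : 'rV[R]_l)
    (z1 : 'rV[R]_m) (z2 : 'rV[R]_l) : Prop :=
  [/\ 0 <= rho,
      dist0_le (frechet_sub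
        (fun w : 'rV[R]_(n + (m + l)) =>
           (fobj (blk1 w) (blk2 w)
            + rho%:E * (ftilde B (blk1 w) (blk2 w) z2 - ftilde B (blk1 w) z1 (blk3 w)))%E)
        (row_mx x (row_mx y1 y2))) eps,
      dist0_le (scale_set rho (frechet_sub (fun z => ftilde B x z y2) z1)) eps,
      dist0_le (scale_set rho (frechet_sub (fun z => - ftilde B x y1 z)%E z2)) eps &
      (ereal_sup [set ftilde B x y1 z | z in setT]
        - ereal_inf [set ftilde B x z y2 | z in setT] <= eps%:E)%E].

Definition fbar_star (x : 'rV[R]_n) : \bar R :=
  ereal_inf [set fbar x y | y in [set y | forall i, gb x y ord0 i <= 0]].

Definition bilevel_kkt (eps : R) (x : 'rV[R]_n) (y1 : 'rV[R]_m) : Prop :=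
  exists z1 : 'rV[R]_m, exists rho : R, exists lam : 'rV[R]_l, exists lamb : 'rV[R]_l,
  [/\ dom fb2 z1, 0 <= rho, (forall i, 0 <= lam ord0 i), (forall i, 0 <= lamb ord0 i) &
  dist0_le (frechet_sub
        (fun w : 'rV[R]_(n + m) =>
           (fobj (lsubmx w) (rsubmx w)
            + rho%:E * (fbar (lsubmx w) (rsubmx w) - fbar (lsubmx w) z1
                        - (vdot lamb (gb (lsubmx w) z1))%:E)
            + (vdot lam (gb (lsubmx w) (rsubmx w)))%:E)%E)
        (row_mx x y1)) eps /\
      dist0_le (scale_set rho
        (frechet_sub (fun z => (fbar x z + (vdot lamb (gb x z))%:E)%E) z1)) eps /\
      vnorm (pos_part (gb x z1)) <= eps /\
      `|vdot lamb (gb x z1)| <= eps /\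
      (fbar x y1 - fbar_star x <= eps%:E)%E /\
      vnorm (pos_part (gb x y1)) <= eps /\
      `|vdot lam (gb x y1)| <= eps].

End Problem.
End Defs.

(* Take lambda := rho z2 and lambda_bar := y2.  The bilevel Lagrangian is then the slice
   {y2 fixed} of the penalised reformulated objective, so its Frechet stationarity is
   inherited, and the saddle gap bounds the lower-level optimality gap.  It remains to
   bound the complementarity residuals.  Testing the gap against Slater's point keeps
   y2 <= 3B/4 once eps <= Lfb D / 2, so y2 may move up (and down where y2_i > 0), and
   stationarity in y2 gives |rho gbar_i(x1,z1)| <= 2 eps; raising y2_i to B in the gap
   gives gbar_i(x1,y1) <= 4 eps / B, and stationarity in z2 bounds gbar_i(x1,y1) from
   below where z2_i > 0.  When eps > Lfb D / 2 the residuals are bounded by a constant,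
   hence O(eps), and when D = 0 they vanish. *)

From Pilot Require Import Defs.
From HB Require Import structures.
From mathcomp Require Import all_boot all_order all_algebra.
From mathcomp Require Import all_classical all_reals all_analysis.
From mathcomp Require Import lra ring.
Import Order.TTheory GRing.Theory Num.Theory.
Import numFieldNormedType.Exports.
Local Open Scope classical_set_scope.
Local Open Scope ring_scope.
Set Implicit Arguments. Unset Strict Implicit. Unset Printing Implicit Defensive.

Section EuclideanRowVectors.
Variable R : realType.

Lemma vdotC k (u v : 'rV[R]_k) : vdot u v = vdot v u.
Proof. by apply: eq_bigr => i _; rewrite mulrC. Qed.

Lemma vdotDl k (u v w : 'rV[R]_k) : vdot (u + v) w = vdot u w + vdot v w.
Proof. by rewrite /vdot -big_split; apply: eq_bigr => i _; rewrite mxE mulrDl. Qed.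

Lemma vdotZl k (a : R) (u w : 'rV[R]_k) : vdot (a *: u) w = a * vdot u w.
Proof. by rewrite /vdot mulr_sumr; apply: eq_bigr => i _; rewrite mxE mulrA. Qed.

Lemma vdot0l k (w : 'rV[R]_k) : vdot 0 w = 0.
Proof. by rewrite /vdot big1 // => i _; rewrite mxE mul0r. Qed.

Lemma vdot0r k (w : 'rV[R]_k) : vdot w 0 = 0.
Proof. by rewrite vdotC vdot0l. Qed.

Lemma vdot_delta k (u : 'rV[R]_k) i : vdot u (delta_mx ord0 i) = u ord0 i.
Proof.
rewrite /vdot (bigD1 i) //= big1 ?addr0 => [|j /negbTE ji]; rewrite mxE eqxx /=.
  by rewrite eqxx mulr1.
by rewrite ji mulr0.
Qed.

Lemma vdot_add_delta k (u w : 'rV[R]_k) (s : R) i :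
  vdot (u + s *: delta_mx ord0 i) w = vdot u w + s * w ord0 i.
Proof. by rewrite vdotDl vdotZl [vdot (delta_mx _ _) _]vdotC vdot_delta. Qed.

Lemma vdot_row_mx k1 k2 (a c : 'rV[R]_k1) (b d : 'rV[R]_k2) :
  vdot (row_mx a b) (row_mx c d) = vdot a c + vdot b d.
Proof.
rewrite /vdot big_split_ord /=.
by congr (_ + _); apply: eq_bigr => i _; rewrite ?row_mxEl ?row_mxEr.
Qed.

Lemma vdotii_ge0 k (u : 'rV[R]_k) : 0 <= vdot u u.
Proof. by apply: sumr_ge0 => i _; rewrite -expr2 sqr_ge0. Qed.

Lemma vnorm_ge0 k (u : 'rV[R]_k) : 0 <= vnorm u.
Proof. exact: sqrtr_ge0. Qed.

Lemma vnormZ k (a : R) (u : 'rV[R]_k) : vnorm (a *: u) = `|a| * vnorm u.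
Proof.
rewrite /vnorm vdotZl vdotC vdotZl mulrA -expr2 sqrtrM ?sqr_ge0 //.
by rewrite sqrtr_sqr.
Qed.

Lemma coord_le_vnorm k (u : 'rV[R]_k) i : `|u ord0 i| <= vnorm u.
Proof.
rewrite -sqrtr_sqr; apply: ler_wsqrtr; rewrite expr2 /vdot (bigD1 i) //= lerDl.
by apply: sumr_ge0 => j _; rewrite -expr2 sqr_ge0.
Qed.

Lemma vnorm_le0 k (u : 'rV[R]_k) : vnorm u <= 0 -> u = 0.
Proof.
move=> u0; apply/rowP => j; rewrite mxE; apply/eqP; rewrite -normr_le0.
exact: le_trans (coord_le_vnorm u j) u0.
Qed.

Lemma vnorm_le_l1 k (u : 'rV[R]_k) : vnorm u <= \sum_i `|u ord0 i|.
Proof.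
have S0 : 0 <= \sum_i `|u ord0 i| by apply: sumr_ge0.
rewrite -(ger0_norm S0) -sqrtr_sqr; apply: ler_wsqrtr.
rewrite expr2 /vdot mulr_suml; apply: ler_sum => i _.
apply: le_trans (ler_norm _) _; rewrite normrM; apply: ler_wpM2l => //.
by rewrite (bigD1 i) //= lerDl; apply: sumr_ge0.
Qed.

Lemma vnorm_coord_bound k (u : 'rV[R]_k) (M : R) :
  (forall i, `|u ord0 i| <= M) -> vnorm u <= k%:R * M.
Proof.
move=> uM; apply: le_trans (vnorm_le_l1 u) _.
have -> : k%:R * M = \sum_(i < k) M by rewrite sumr_const card_ord mulr_natl.
exact: ler_sum.
Qed.

Lemma vnorm_row_mx0l k1 k2 (b : 'rV[R]_k2) : vnorm (row_mx (0 : 'rV[R]_k1) b) = vnorm b.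
Proof. by rewrite /vnorm vdot_row_mx vdot0l add0r. Qed.

Lemma vnorm_row_mx0 k1 k2 k3 (a : 'rV[R]_k1) (b : 'rV[R]_k2) :
  vnorm (row_mx a (row_mx b (0 : 'rV[R]_k3))) = vnorm (row_mx a b).
Proof. by rewrite /vnorm !vdot_row_mx vdot0l addr0. Qed.

Lemma vnorm_rsubmx k1 k2 (w : 'rV[R]_(k1 + k2)) : vnorm (rsubmx w) <= vnorm w.
Proof.
by rewrite -{2}(hsubmxK w) /vnorm vdot_row_mx; apply: ler_wsqrtr; rewrite lerDr vdotii_ge0.
Qed.

Lemma vnorm_row_mx_le k1 k2 k3 (a : 'rV[R]_k1) (b : 'rV[R]_k2) (c : 'rV[R]_k3) :
  vnorm (row_mx a b) <= vnorm (row_mx a (row_mx b c)).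
Proof.
by rewrite /vnorm !vdot_row_mx; apply: ler_wsqrtr; rewrite addrA lerDl vdotii_ge0.
Qed.

Lemma vnorm_blk12 k1 k2 k3 (v : 'rV[R]_(k1 + (k2 + k3))) :
  vnorm (row_mx (blk1 v) (blk2 v)) <= vnorm v.
Proof. by have := vnorm_row_mx_le (blk1 v) (blk2 v) (blk3 v); rewrite !hsubmxK. Qed.

Lemma vnorm_blk3 k1 k2 k3 (v : 'rV[R]_(k1 + (k2 + k3))) : vnorm (blk3 v) <= vnorm v.
Proof. exact: le_trans (vnorm_rsubmx _) (vnorm_rsubmx _). Qed.

Lemma vdot_blk12 k1 k2 k3 (v : 'rV[R]_(k1 + (k2 + k3))) a b :
  vdot v (row_mx a (row_mx b 0)) = vdot (row_mx (blk1 v) (blk2 v)) (row_mx a b).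
Proof. by rewrite -{1}[v]hsubmxK -{1}[rsubmx v]hsubmxK !vdot_row_mx vdot0r addr0. Qed.

Lemma vdot_blk3 k1 k2 k3 (v : 'rV[R]_(k1 + (k2 + k3))) c :
  vdot v (row_mx 0 (row_mx 0 c)) = vdot (blk3 v) c.
Proof. by rewrite -{1}[v]hsubmxK -{1}[rsubmx v]hsubmxK !vdot_row_mx !vdot0r !add0r. Qed.

Lemma vnorm_pos_part_le k (u : 'rV[R]_k) (M : R) :
  0 <= M -> (forall i, u ord0 i <= M) -> vnorm (pos_part u) <= k%:R * M.
Proof.
move=> M0 uM; apply: vnorm_coord_bound => i.
by rewrite mxE ger0_norm ?le_max ?lexx ?orbT // ge_max uM.
Qed.

Lemma vdot_coord_bound k (u v : 'rV[R]_k) (M : R) :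
  (forall i, `|u ord0 i * v ord0 i| <= M) -> `|vdot u v| <= k%:R * M.
Proof.
move=> uvM; apply: le_trans (ler_norm_sum _ _ _) _.
have -> : k%:R * M = \sum_(i < k) M by rewrite sumr_const card_ord mulr_natl.
exact: ler_sum.
Qed.

End EuclideanRowVectors.

Section BoundedSets.
Variable R : realType.

Definition coord_bounded k (S : set 'rV[R]_k) (M : R) : Prop :=
  forall w, S w -> forall i, `|w ord0 i| <= M.

Lemma compact_coord_bounded k (S : set 'rV[R]_k) :
  compact S -> exists M, coord_bounded S M.
Proof.
move=> /compact_bounded[M0 [_ SM]]; exists (`|M0| + 1) => w Sw i.
apply: le_trans (SM _ _ w Sw); last by rewrite (le_lt_trans (ler_norm _)) ?ltrDl.
rewrite [X in _ <= X]/Num.norm /= mx_normrE.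
exact: (le_bigmax _ (fun ij : 'I_1 * 'I_k => `|w ij.1 ij.2|) (ord0, i)).
Qed.

Lemma coord_bounded_diam k (S : set 'rV[R]_k) M y y' :
  coord_bounded S M -> S y -> S y' -> vnorm (y - y') <= diam S.
Proof.
move=> SM Sy Sy'; apply: ub_le_sup; last by exists y, y'.
exists (k%:R * (M + M)) => _ [a [b [Sa [Sb ->]]]].
apply: vnorm_coord_bound => i; rewrite !mxE.
by apply: le_trans (ler_normB _ _) _; apply: lerD; [apply: SM | apply: SM].
Qed.

Lemma coord_bounded_prod n m (X : set 'rV[R]_n) (Y : set 'rV[R]_m) MX MY :
  coord_bounded X MX -> coord_bounded Y MY ->
  coord_bounded (prod_set X Y) (Num.max MX MY).
Proof.
move=> XM YM w [Xw Yw] i; rewrite -(hsubmxK w) mxE le_max.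
case: fintype.split => j.
  by rewrite XM.
by rewrite YM ?orbT.
Qed.

Lemma vlipschitz_coord_bounded k p (g : 'rV[R]_k -> 'rV[R]_p) S L M :
  coord_bounded S M -> vlipschitz_on g S L ->
  exists Mg, forall w, S w -> forall i, `|g w ord0 i| <= Mg.
Proof.
move=> SM gL; have [[w0 Sw0]|noS] := pselect (exists w0, S w0); last first.
  by exists 0 => w Sw; case: noS; exists w.
exists (vnorm (g w0) + `|L| * (k%:R * (M + M))) => w Sw i.
have -> : g w ord0 i = g w0 ord0 i + (g w - g w0) ord0 i by rewrite !mxE addrCA subrr addr0.
apply: le_trans (ler_normD _ _) _; apply: lerD; first exact: coord_le_vnorm.
apply: le_trans (coord_le_vnorm _ i) _; apply: le_trans (gL _ _ Sw Sw0) _.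
apply: le_trans (ler_wpM2r (vnorm_ge0 _) (ler_norm L)) _.
apply: ler_wpM2l => //; apply: vnorm_coord_bound => j; rewrite !mxE.
by apply: le_trans (ler_normB _ _) _; apply: lerD; apply: SM.
Qed.

Lemma compact_prod_vlipschitz_bounded n m p (g : 'rV[R]_n -> 'rV[R]_m -> 'rV[R]_p)
    (X : set 'rV[R]_n) (Y : set 'rV[R]_m) L :
  compact X -> compact Y -> vlipschitz_on (uncurry2 g) (prod_set X Y) L ->
  exists2 Mg, 0 <= Mg & forall x y i, X x -> Y y -> `|g x y ord0 i| <= Mg.
Proof.
move=> /compact_coord_bounded[MX XM] /compact_coord_bounded[MY YM] gL.
have [Mg gM] := vlipschitz_coord_bounded (coord_bounded_prod XM YM) gL.
exists (Num.max Mg 0) => [|x y i Xx Yy]; first by rewrite le_max lexx orbT.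
have := gM (row_mx x y); rewrite /uncurry2 /prod_set /= row_mxKl row_mxKr le_max.
by move=> -> //; rewrite orTb.
Qed.

End BoundedSets.

Section FrechetSubdifferential.
Variable R : realType.

Lemma frechet_sub_dir k (h : 'rV[R]_k -> \bar R) (p v u : 'rV[R]_k) (a t0 : R) :
  frechet_sub h p v -> 0 < t0 ->
  (forall t, 0 < t -> t <= t0 -> (h (p + t *: u)%R <= (fine (h p) + t * a)%:E)%E) ->
  vdot v u <= a.
Proof.
move=> [_ hv] t0_gt0 h_slope; apply/ler_addgt0Pr => e e_gt0.
set c := vnorm u + 1; have u0 := vnorm_ge0 u.
have c_gt0 : 0 < c by rewrite /c; lra.
have [d d_gt0 hd] := hv (e / c) (divr_gt0 e_gt0 c_gt0).
set t := Num.min t0 (d / (2 * c)).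
have t_gt0 : 0 < t by rewrite lt_min t0_gt0 divr_gt0 // mulr_gt0.
have t_le : t <= t0 by rewrite ge_min lexx.
have tc_le : t * c <= d / 2.
  have -> : d / 2 = d / (2 * c) * c by field; rewrite gt_eqF.
  by rewrite ler_wpM2r ?ge_min ?lexx ?orbT // ltW.
have step : p + t *: u - p = t *: u by rewrite addrC addKr.
have near : vnorm (p + t *: u - p) < d.
  by rewrite step vnormZ gtr0_norm //; rewrite /c in tc_le; nra.
have := le_trans (hd _ near) (h_slope t t_gt0 t_le).
rewrite lee_fin step vnormZ gtr0_norm // vdotC vdotZl vdotC => ineq.
have vu_le : vdot v u - a <= e / c * vnorm u by rewrite -(ler_pM2l t_gt0); lra.
have ec_le : e / c * vnorm u <= e.
  by rewrite mulrAC ler_pdivrMr // ler_wpM2l ?ltW // /c; lra.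
lra.
Qed.

Lemma frechet_sub_slice k1 k2 k3 (F : 'rV[R]_(k1 + (k2 + k3)) -> \bar R)
    (x : 'rV[R]_k1) (y : 'rV[R]_k2) (c : 'rV[R]_k3) v :
  frechet_sub F (row_mx x (row_mx y c)) v ->
  frechet_sub (fun w => F (row_mx (lsubmx w) (row_mx (rsubmx w) c))) (row_mx x y)
    (row_mx (blk1 v) (blk2 v)).
Proof.
rewrite /frechet_sub !row_mxKl !row_mxKr => -[Ffin Fv]; split => // e e_gt0.
have [d d_gt0 hd] := Fv e e_gt0; exists d => // w.
have lift : row_mx (lsubmx w) (row_mx (rsubmx w) c) - row_mx x (row_mx y c)
    = row_mx (lsubmx (w - row_mx x y)) (row_mx (rsubmx (w - row_mx x y)) 0).
  by rewrite linearB /= linearB /= !row_mxKl !row_mxKr !opp_row_mx !add_row_mx subrr.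
by have := hd (row_mx (lsubmx w) (row_mx (rsubmx w) c));
  rewrite lift vnorm_row_mx0 vdot_blk12 hsubmxK.
Qed.

Lemma dist0_leW k (S : set 'rV[R]_k) e e' : dist0_le S e -> e <= e' -> dist0_le S e'.
Proof.
move=> Se ee' d d_gt0; have [v Sv vle] := Se d d_gt0; exists v => //.
by apply: le_trans vle _; rewrite lerD2r.
Qed.

End FrechetSubdifferential.

Lemma box_add_delta (R : realType) l (B s : R) (y : 'rV[R]_l) i :
  box B y -> 0 <= y ord0 i + s <= B -> box B (y + s *: delta_mx ord0 i).
Proof.
move=> By yi j; rewrite !mxE eqxx /=.
by case: eqP => [->|_]; rewrite ?mulr1 ?mulr0 ?addr0.
Qed.

Section BilevelReformulation.
Variables (R : realType) (n m l : nat).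
Variables (f1 fb1 : 'rV[R]_n -> 'rV[R]_m -> R) (f2 : 'rV[R]_n -> \bar R)
  (fb2 : 'rV[R]_m -> \bar R) (gb : 'rV[R]_n -> 'rV[R]_m -> 'rV[R]_l).
Variables (Lfb G rho Mg : R).
Hypothesis Mg_ge0 : 0 <= Mg.
Hypothesis f2_neqNy : forall x, f2 x <> -oo%E.
Hypothesis fb2_neqNy : forall y, fb2 y <> -oo%E.
Hypothesis dom_fb2_compact : compact (dom fb2).
Hypothesis fbar_lipschitz :
  elipschitz_on (uncurry2 (fbar fb1 fb2)) (prod_set (dom f2) (dom fb2)) Lfb.
Hypothesis G_gt0 : 0 < G.
Hypothesis slater : forall x, dom f2 x ->
  exists2 yh, dom fb2 yh & forall i, gb x yh ord0 i <= - G.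
Hypothesis gb_bounded :
  forall x y i, dom f2 x -> dom fb2 y -> `|gb x y ord0 i| <= Mg.

Local Notation D := (diam (dom fb2)).
Definition multiplier_bound : R := 2 * Lfb * D / G.
Local Notation B := multiplier_bound.
Local Notation fbar := (fbar fb1 fb2).
Local Notation ftilde := (ftilde fb1 fb2 gb B).

Definition fbar_fin x y : R := fb1 x y + fine (fb2 y).

Lemma fbarE x y : dom fb2 y -> fbar x y = (fbar_fin x y)%:E.
Proof. by rewrite /dom /fbar /fbar_fin /=; case: (fb2 y) (@fb2_neqNy y). Qed.

Lemma ftilde_box x y z : box B z -> ftilde x y z = (fbar x y + (vdot z (gb x y))%:E)%E.
Proof. by move=> Bz; rewrite /Defs.ftilde /ind_box asboolT // sube0. Qed.

Lemma ftildeE x y z : box B z -> dom fb2 y ->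
  ftilde x y z = (fbar_fin x y + vdot z (gb x y))%:E.
Proof. by move=> Bz Yy; rewrite ftilde_box // fbarE. Qed.

Lemma dom_of_fin_ftilde x y z : box B z -> ftilde x y z \is a fin_num -> dom fb2 y.
Proof.
move=> Bz; rewrite ftilde_box // /Defs.fbar /dom /=.
by case: (fb2 y) (@fb2_neqNy y) => //= r _ _; exact: ltry.
Qed.

Lemma box_of_fin_oppftilde x y z : dom fb2 y -> (- ftilde x y z)%E \is a fin_num -> box B z.
Proof.
move=> Yy; apply: contraTP => Bz.
by rewrite /Defs.ftilde fbarE // /ind_box asboolF.
Qed.

Lemma dom_fb2_diam y y' : dom fb2 y -> dom fb2 y' -> vnorm (y - y') <= D.
Proof. by have [M YM] := compact_coord_bounded dom_fb2_compact; exact: coord_bounded_diam YM. Qed.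

Lemma fbar_fin_sub_le x y y' : 0 <= Lfb -> dom f2 x -> dom fb2 y -> dom fb2 y' ->
  fbar_fin x y - fbar_fin x y' <= Lfb * D.
Proof.
move=> Lfb_ge0 Xx Yy Yy'.
have := fbar_lipschitz (w := row_mx x y) (w' := row_mx x y').
rewrite /uncurry2 /prod_set /= !row_mxKl !row_mxKr !fbarE // => /(_ (conj Xx Yy) (conj Xx Yy')).
rewrite -EFinB abse_EFin lee_fin opp_row_mx add_row_mx subrr vnorm_row_mx0l => lip.
apply: le_trans (ler_norm _) (le_trans lip _).
by rewrite ler_wpM2l // dom_fb2_diam.
Qed.

Definition ref_lagrangian (z1 : 'rV[R]_m) (z2 : 'rV[R]_l) (w : 'rV[R]_(n + (m + l))) :
    \bar R :=
  (fobj f1 f2 (blk1 w) (blk2 w)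
   + rho%:E * (ftilde (blk1 w) (blk2 w) z2 - ftilde (blk1 w) z1 (blk3 w)))%E.

Definition bilevel_lagrangian (z1 : 'rV[R]_m) (lam lamb : 'rV[R]_l) (w : 'rV[R]_(n + m)) :
    \bar R :=
  (fobj f1 f2 (lsubmx w) (rsubmx w)
   + rho%:E * (fbar (lsubmx w) (rsubmx w) - fbar (lsubmx w) z1
               - (vdot lamb (gb (lsubmx w) z1))%:E)
   + (vdot lam (gb (lsubmx w) (rsubmx w)))%:E)%E.

Definition compl_residual x (y1 z1 : 'rV[R]_m) (y2 z2 : 'rV[R]_l) : R :=
  vnorm (pos_part (gb x z1)) + `|vdot y2 (gb x z1)|
  + vnorm (pos_part (gb x y1)) + `|vdot (rho *: z2) (gb x y1)|.

Definition residual_slope : R := l%:R * (2 / rho + 2 * B / rho + 4 / B + 2 * B + 4 * rho).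
Definition residual_bound : R := l%:R * Mg * (2 + B + rho * B).
(* [2 / (Lfb * D)] converts the eps-free bound into O(eps) in the regime
   [eps > Lfb * D / 2]; it is the junk value 0 when [D = 0], where the residual vanishes. *)
Definition kkt_const : R := 1 + residual_slope + residual_bound * (2 / (Lfb * D)).

Section Point.
Variables (eps : R) (x : 'rV[R]_n) (y1 z1 : 'rV[R]_m) (y2 z2 : 'rV[R]_l).
Hypotheses (rho_gt0 : 0 < rho) (Lfb_gt0 : 0 < Lfb) (eps_gt0 : 0 < eps).
Hypotheses (Xx : dom f2 x) (Yy1 : dom fb2 y1) (Yz1 : dom fb2 z1).
Hypotheses (By2 : box B y2) (Bz2 : box B z2).
Hypothesis saddle_gap : forall z y, box B z -> dom fb2 y ->
  fbar_fin x y1 + vdot z (gb x y1) - (fbar_fin x y + vdot y2 (gb x y)) <= eps.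
Variables (V : 'rV[R]_(n + (m + l))) (s2 : 'rV[R]_l).
Hypotheses (V_subgrad : frechet_sub (ref_lagrangian z1 z2) (row_mx x (row_mx y1 y2)) V)
  (V_small : vnorm V <= eps + eps).
Hypotheses (s2_subgrad : frechet_sub (fun z => - ftilde x y1 z)%E z2 s2)
  (s2_small : vnorm (rho *: s2) <= eps + eps).

Lemma diam_dom_fb2_ge0 : 0 <= D.
Proof. by have [yh Yyh _] := slater Xx; exact: le_trans (vnorm_ge0 _) (dom_fb2_diam Yyh Yyh). Qed.

Lemma multiplier_bound_ge0 : 0 <= B.
Proof. by rewrite /multiplier_bound divr_ge0 ?mulr_ge0 ?diam_dom_fb2_ge0 ?ltW. Qed.

Lemma box_bound0 : box B (0 : 'rV[R]_l).
Proof. by move=> i; rewrite mxE lexx multiplier_bound_ge0. Qed.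

Lemma lower_level_gap : (fbar x y1 - fbar_star fb1 fb2 gb x <= eps%:E)%E.
Proof.
have lb : ((fbar_fin x y1 - eps)%:E <= fbar_star fb1 fb2 gb x)%E.
  apply/ereal_infP => _ [y feas <-].
  have [Yy|nYy] := pselect (dom fb2 y); last first.
    have -> : fbar x y = +oo%E.
      by move: nYy; rewrite /dom /Defs.fbar /=; case: (fb2 y) (@fb2_neqNy y) => //= r; rewrite ltry.
    exact: leey.
  rewrite fbarE // lee_fin; have := saddle_gap box_bound0 Yy; rewrite vdot0l addr0.
  have : vdot y2 (gb x y) <= 0.
    apply: sumr_le0 => j _; apply: mulr_ge0_le0 => //.
    by case/andP: (By2 j).
  lra.
rewrite fbarE //; move: lb; case: (fbar_star fb1 fb2 gb x) => [r| |] //=.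
  by rewrite !lee_fin => ?; lra.
by rewrite addeNy leNye.
Qed.

Lemma y2_slater_bound i : G * y2 ord0 i <= eps + Lfb * D.
Proof.
have [yh Yyh gyh] := slater Xx.
have := saddle_gap box_bound0 Yyh; rewrite vdot0l addr0.
have := fbar_fin_sub_le (ltW Lfb_gt0) Xx Yyh Yy1.
have : vdot y2 (gb x yh) <= - (G * y2 ord0 i).
  rewrite /vdot (bigD1 i) //= -[X in _ <= X]addr0; apply: lerD.
    have -> : - (G * y2 ord0 i) = y2 ord0 i * - G by ring.
    by rewrite ler_wpM2l ?gyh //; case/andP: (By2 i).
  apply: sumr_le0 => j _; apply: mulr_ge0_le0; first by case/andP: (By2 j).
  by apply: le_trans (gyh j) _; rewrite oppr_le0 ltW.
lra.
Qed.

Lemma multiplier_bound_gt0 : 0 < D -> 0 < B.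
Proof. by move=> D_gt0; rewrite /multiplier_bound divr_gt0 ?mulr_gt0. Qed.

Lemma y2_le_three_quarters : eps <= Lfb * D / 2 -> forall i, y2 ord0 i <= B * 3 / 4.
Proof.
move=> eps_le i; rewrite -(ler_pM2l G_gt0).
have -> : G * (B * 3 / 4) = Lfb * D * (3 / 2).
  by rewrite /multiplier_bound; field; rewrite gt_eqF.
by have := y2_slater_bound i; lra.
Qed.

Lemma gb_y1_le i : 0 < B -> y2 ord0 i <= B * 3 / 4 -> gb x y1 ord0 i <= 4 * eps / B.
Proof.
move=> B_gt0 y2i_le; have /andP[y2i_ge0 _] := By2 i.
have Bz : box B (y2 + (B - y2 ord0 i) *: delta_mx ord0 i).
  by apply: box_add_delta => //; apply/andP; split; lra.
have := saddle_gap Bz Yy1; rewrite vdot_add_delta.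
rewrite ler_pdivlMr //; have := eps_gt0; case: (leP (gb x y1 ord0 i) 0) => g_sign.
  by have : gb x y1 ord0 i * B <= 0 := mulr_le0_ge0 g_sign (ltW B_gt0); lra.
have : 0 <= gb x y1 ord0 i * (B * 3 / 4 - y2 ord0 i) by rewrite mulr_ge0 ?subr_ge0 // ltW.
lra.
Qed.

Lemma ref_lagrangian_y2 Y : box B Y ->
  ref_lagrangian z1 z2 (row_mx x (row_mx y1 Y))
  = (f1 x y1 + fine (f2 x)
     + rho * (fbar_fin x y1 + vdot z2 (gb x y1) - (fbar_fin x z1 + vdot Y (gb x z1))))%:E.
Proof.
move=> BY; rewrite /ref_lagrangian /blk1 /blk2 /blk3 !row_mxKr !row_mxKl /fobj !ftildeE //.
have -> : f2 x = (fine (f2 x))%:E by move: Xx (@f2_neqNy x); rewrite /dom /=; case: (f2 x).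
by rewrite -EFinB -EFinM -!EFinD.
Qed.

Lemma ref_lagrangian_slope_y2 i (s t0 : R) : 0 < t0 ->
  (forall t, 0 < t -> t <= t0 -> box B (y2 + (t * s) *: delta_mx ord0 i)) ->
  s * blk3 V ord0 i <= - (s * (rho * gb x z1 ord0 i)).
Proof.
move=> t0_gt0 Bt.
have := frechet_sub_dir (u := row_mx 0 (row_mx 0 (s *: delta_mx ord0 i)))
  (a := - (s * (rho * gb x z1 ord0 i))) V_subgrad t0_gt0.
rewrite vdot_blk3 vdotC vdotZl vdotC vdot_delta; apply => t t_gt0 t_le.
have := Bt t t_gt0 t_le.
rewrite !scale_row_mx !scaler0 !add_row_mx !addr0 scalerA => BYt.
by rewrite !ref_lagrangian_y2 //= lee_fin vdot_add_delta; lra.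
Qed.

Lemma blk3_subgradient_small i : `|blk3 V ord0 i| <= 2 * eps.
Proof. by have := V_small; have := vnorm_blk3 V; have := coord_le_vnorm (blk3 V) i; lra. Qed.

Lemma rho_gb_z1_le i : y2 ord0 i < B -> rho * gb x z1 ord0 i <= 2 * eps.
Proof.
move=> y2i_lt; have /andP[y2i_ge0 _] := By2 i.
have Bt t : 0 < t -> t <= B - y2 ord0 i -> box B (y2 + (t * 1) *: delta_mx ord0 i).
  by move=> t_gt0 t_le; apply: box_add_delta => //; apply/andP; split; lra.
have t0_gt0 : 0 < B - y2 ord0 i by rewrite subr_gt0.
have := @ref_lagrangian_slope_y2 i 1 _ t0_gt0 Bt.
have := blk3_subgradient_small i; rewrite ler_norml.
by case/andP; lra.
Qed.

Lemma rho_gb_z1_ge i : 0 < y2 ord0 i -> - (2 * eps) <= rho * gb x z1 ord0 i.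
Proof.
move=> y2i_gt0; have /andP[_ y2i_le] := By2 i.
have Bt t : 0 < t -> t <= y2 ord0 i -> box B (y2 + (t * -1) *: delta_mx ord0 i).
  by move=> t_gt0 t_le; apply: box_add_delta => //; apply/andP; split; lra.
have := @ref_lagrangian_slope_y2 i (-1) _ y2i_gt0 Bt.
have := blk3_subgradient_small i; rewrite ler_norml.
by case/andP; lra.
Qed.

Lemma gb_y1_ge i : 0 < z2 ord0 i -> - s2 ord0 i <= gb x y1 ord0 i.
Proof.
move=> z2i_gt0; have /andP[_ z2i_le] := Bz2 i.
have := frechet_sub_dir (u := (-1) *: delta_mx ord0 i) (a := gb x y1 ord0 i) s2_subgrad z2i_gt0.
rewrite vdotC vdotZl vdotC vdot_delta mulN1r; apply => t t_gt0 t_le.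
have BYt : box B (z2 + (t * -1) *: delta_mx ord0 i).
  by apply: box_add_delta => //; apply/andP; split; lra.
by rewrite scalerA !ftildeE // -!EFinN /= lee_fin vdot_add_delta; lra.
Qed.

Lemma subgradient_z2_coord_small i : rho * `|s2 ord0 i| <= 2 * eps.
Proof.
have := s2_small; rewrite vnormZ gtr0_norm // => s2_le.
by have := ler_wpM2l (ltW rho_gt0) (coord_le_vnorm s2 i); lra.
Qed.

Lemma pos_part_gb_z1_le : (forall i, y2 ord0 i < B) ->
  vnorm (pos_part (gb x z1)) <= l%:R * (2 * eps / rho).
Proof.
move=> y2_lt; apply: vnorm_pos_part_le => [|i]; first by rewrite divr_ge0 ?mulr_ge0 ?ltW.
by rewrite ler_pdivlMr // mulrC rho_gb_z1_le.
Qed.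

Lemma vdot_y2_gb_z1_le : (forall i, y2 ord0 i < B) ->
  `|vdot y2 (gb x z1)| <= l%:R * (B * (2 * eps / rho)).
Proof.
move=> y2_lt; apply: vdot_coord_bound => i; have /andP[y2i_ge0 _] := By2 i.
rewrite normrM ger0_norm //; move: y2i_ge0; rewrite le_eqVlt => /predU1P[<-|y2i_gt0].
  by rewrite mul0r mulr_ge0 ?multiplier_bound_ge0 // divr_ge0 ?mulr_ge0 // ltW.
apply: ler_pM; [exact: ltW | exact: normr_ge0 | exact: ltW (y2_lt i) |].
rewrite ler_pdivlMr // -(gtr0_norm rho_gt0) mulrC -normrM ler_norml.
by rewrite rho_gb_z1_ge ?rho_gb_z1_le.
Qed.

Lemma pos_part_gb_y1_le : 0 < B -> (forall i, y2 ord0 i <= B * 3 / 4) ->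
  vnorm (pos_part (gb x y1)) <= l%:R * (4 * eps / B).
Proof.
move=> B_gt0 y2_le; apply: vnorm_pos_part_le => [|i]; last exact: gb_y1_le.
by apply: divr_ge0; [rewrite mulr_ge0 // ltW | exact: ltW].
Qed.

Lemma vdot_z2_gb_y1_le : 0 < B -> (forall i, y2 ord0 i <= B * 3 / 4) ->
  `|vdot (rho *: z2) (gb x y1)| <= l%:R * (2 * B * eps + 4 * rho * eps).
Proof.
move=> B_gt0 y2_le; apply: vdot_coord_bound => i; rewrite mxE.
have /andP[z2i_ge0 z2i_le] := Bz2 i.
move: z2i_ge0; rewrite le_eqVlt => /predU1P[<-|z2i_gt0].
  by rewrite mulr0 mul0r normr0; have := eps_gt0; have := rho_gt0; nra.
have g_le : `|gb x y1 ord0 i| <= `|s2 ord0 i| + 4 * eps / B.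
  have := gb_y1_le B_gt0 (y2_le i); have := gb_y1_ge z2i_gt0.
  have : 0 <= 4 * eps / B by apply: divr_ge0; [rewrite mulr_ge0 // ltW | exact: ltW].
  have := ler_norm (s2 ord0 i); have := ler_norm (- s2 ord0 i); rewrite normrN ler_norml.
  by move=> *; apply/andP; split; lra.
rewrite !normrM (gtr0_norm rho_gt0) (gtr0_norm z2i_gt0).
have : rho * z2 ord0 i * `|gb x y1 ord0 i| <= rho * B * (`|s2 ord0 i| + 4 * eps / B).
  apply: ler_pM => //; first by rewrite mulr_ge0 // ltW.
  by rewrite ler_wpM2l // ltW.
have : rho * B * (4 * eps / B) = 4 * rho * eps.
  by rewrite -mulrA (mulrC B) divfK ?gt_eqF //; ring.
by have := ler_wpM2l (ltW B_gt0) (subgradient_z2_coord_small i); lra.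
Qed.

Lemma compl_residual_small : 0 < D -> eps <= Lfb * D / 2 ->
  compl_residual x y1 z1 y2 z2 <= residual_slope * eps.
Proof.
move=> D_gt0 eps_le; have B_gt0 := multiplier_bound_gt0 D_gt0.
have y2_le := y2_le_three_quarters eps_le.
have y2_lt i : y2 ord0 i < B by apply: le_lt_trans (y2_le i) _; lra.
have := pos_part_gb_z1_le y2_lt; have := vdot_y2_gb_z1_le y2_lt.
have := pos_part_gb_y1_le B_gt0 y2_le; have := vdot_z2_gb_y1_le B_gt0 y2_le.
rewrite /compl_residual /residual_slope; lra.
Qed.

Lemma compl_residual_bounded : compl_residual x y1 z1 y2 z2 <= residual_bound.
Proof.
have B_ge0 := multiplier_bound_ge0.
have Q1 : vnorm (pos_part (gb x z1)) <= l%:R * Mg.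
  by apply: vnorm_pos_part_le => // i; apply: le_trans (ler_norm _) _; exact: gb_bounded.
have Q2 : `|vdot y2 (gb x z1)| <= l%:R * (B * Mg).
  apply: vdot_coord_bound => i; have /andP[? ?] := By2 i.
  rewrite normrM ger0_norm //.
  by apply: ler_pM => //; exact: gb_bounded.
have Q3 : vnorm (pos_part (gb x y1)) <= l%:R * Mg.
  by apply: vnorm_pos_part_le => // i; apply: le_trans (ler_norm _) _; exact: gb_bounded.
have Q4 : `|vdot (rho *: z2) (gb x y1)| <= l%:R * (rho * B * Mg).
  apply: vdot_coord_bound => i; have /andP[? ?] := Bz2 i.
  rewrite mxE !normrM (gtr0_norm rho_gt0) ger0_norm //.
  apply: ler_pM; [by rewrite mulr_ge0 // ltW | exact: normr_ge0 | | exact: gb_bounded].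
  by rewrite ler_wpM2l // ltW.
rewrite /compl_residual /residual_bound; lra.
Qed.

Lemma compl_residual_diam0 : D = 0 -> compl_residual x y1 z1 y2 z2 <= 0.
Proof.
move=> D0; have B0 : B = 0 by rewrite /multiplier_bound D0 mulr0 mul0r.
have box_eq0 (z : 'rV[R]_l) : box B z -> z = 0.
  move=> Bz; apply/rowP => i; rewrite mxE; apply/le_anti.
  by have := Bz i; rewrite B0 andbC.
have [yh Yyh gyh] := slater Xx.
have pos_le0 y : dom fb2 y -> vnorm (pos_part (gb x y)) <= 0.
  move=> Yy; have -> : y = yh by apply/subr0_eq/vnorm_le0; rewrite -D0 dom_fb2_diam.
  rewrite -(mulr0 l%:R); apply: vnorm_pos_part_le => // i.
  by apply: le_trans (gyh i) _; rewrite oppr_le0 ltW.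
rewrite /compl_residual (box_eq0 _ By2) (box_eq0 _ Bz2) scaler0 !vdot0l normr0.
by have := pos_le0 _ Yz1; have := pos_le0 _ Yy1; lra.
Qed.

Lemma residual_slope_ge0 : 0 <= residual_slope.
Proof.
have r0 := ltW rho_gt0; rewrite /residual_slope; move: (B) multiplier_bound_ge0 => b b0.
by rewrite mulr_ge0 // !addr_ge0 //; rewrite ?divr_ge0 //; rewrite ?mulr_ge0.
Qed.

Lemma residual_bound_ge0 : 0 <= residual_bound.
Proof.
have r0 := ltW rho_gt0; rewrite /residual_bound; move: (B) multiplier_bound_ge0 => b b0.
by rewrite !mulr_ge0 // !addr_ge0 //; rewrite ?mulr_ge0.
Qed.

Lemma kkt_const_ge1 : 1 <= kkt_const.
Proof.
have : 0 <= 2 / (Lfb * D) by rewrite divr_ge0 //; rewrite mulr_ge0 ?diam_dom_fb2_ge0 // ltW.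
move/(mulr_ge0 residual_bound_ge0); have := residual_slope_ge0.
by rewrite /kkt_const; lra.
Qed.

Lemma compl_residual_le : compl_residual x y1 z1 y2 z2 <= kkt_const * eps.
Proof.
have scale_ge0 : 0 <= 2 / (Lfb * D).
  by rewrite divr_ge0 //; rewrite mulr_ge0 ?diam_dom_fb2_ge0 // ltW.
have := mulr_ge0 (mulr_ge0 residual_bound_ge0 scale_ge0) (ltW eps_gt0).
have := mulr_ge0 residual_slope_ge0 (ltW eps_gt0).
have := eps_gt0; rewrite /kkt_const.
have := diam_dom_fb2_ge0; rewrite le_eqVlt => /predU1P[D0|D_gt0].
  by have := compl_residual_diam0 (esym D0); lra.
have [eps_le|eps_gt] := leP eps (Lfb * D / 2).
  by have := compl_residual_small D_gt0 eps_le; lra.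
have : 1 <= 2 / (Lfb * D) * eps.
  by rewrite mulrAC ler_pdivlMr ?mulr_gt0 // mul1r; lra.
move=> /(ler_wpM2l residual_bound_ge0); rewrite mulr1 mulrA.
by have := compl_residual_bounded; lra.
Qed.

End Point.

Lemma bilevel_lagrangian_slice (z1 : 'rV[R]_m) (y2 z2 : 'rV[R]_l) :
  0 < rho -> dom fb2 z1 -> box B y2 -> box B z2 ->
  bilevel_lagrangian z1 (rho *: z2) y2
  = (fun w => ref_lagrangian z1 z2 (row_mx (lsubmx w) (row_mx (rsubmx w) y2))).
Proof.
move=> rho_gt0 Yz1 By2 Bz2; apply/funext => w.
rewrite /ref_lagrangian /bilevel_lagrangian /blk1 /blk2 /blk3 !row_mxKr !row_mxKl.
rewrite !ftilde_box // (fbarE _ Yz1) vdotZl.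
move: (lsubmx w) (rsubmx w) => x' y'.
have fobj_neqNy : fobj f1 f2 x' y' != -oo%E.
  by rewrite /fobj; case: (f2 x') (@f2_neqNy x').
rewrite /Defs.fbar; case E: (fb2 y') => [r| |]; last by have := @fb2_neqNy y'; rewrite E.
  do 8?(first [rewrite -EFinD | rewrite -EFinB | rewrite -EFinM]).
  by rewrite -addeA -EFinD; congr (_ + EFin _); ring.
have rE : (0 < rho%:E)%E by rewrite lte_fin.
by rewrite addey // -!EFinN !addye // gt0_muley // addey // addye.
Qed.

Lemma bilevel_kkt_of_ref_kkt eps x (y1 z1 : 'rV[R]_m) (y2 z2 : 'rV[R]_l) :
  0 < eps -> dom f2 x -> dom fb2 y1 -> box B y2 -> eps <= rho * Lfb / 4 ->
  ref_kkt f1 fb1 f2 fb2 gb B eps rho x y1 y2 z1 z2 ->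
  bilevel_kkt f1 fb1 f2 fb2 gb (kkt_const * eps) x y1.
Proof.
move=> eps_gt0 Xx Yy1 By2 eps_le [rho_ge0 dist_xy dist_z1 dist_z2 gap].
have rho_gt0 : 0 < rho.
  rewrite lt_neqAle rho_ge0 andbT; apply: contraTneq eps_le => <-.
  by rewrite mul0r mul0r -ltNge.
have Lfb_gt0 : 0 < Lfb by rewrite -(pmulr_rgt0 _ rho_gt0); lra.
have [V V_subgrad V_small] := dist_xy eps eps_gt0.
have [_ [s1 s1_subgrad ->] _] := dist_z1 eps eps_gt0.
have [_ [s2 s2_subgrad ->] s2_small] := dist_z2 eps eps_gt0.
have Yz1 := dom_of_fin_ftilde By2 s1_subgrad.1.
have Bz2 := box_of_fin_oppftilde Yy1 s2_subgrad.1.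
have saddle_gap z y : box B z -> dom fb2 y ->
    fbar_fin x y1 + vdot z (gb x y1) - (fbar_fin x y + vdot y2 (gb x y)) <= eps.
  move=> Bz Yy; rewrite -lee_fin EFinB; apply: le_trans gap; apply: leeB.
    by apply: ereal_sup_ubound; exists z => //; rewrite ftildeE.
  by apply: ereal_inf_lbound; exists y => //; rewrite ftildeE.
have eps_le_C := ler_peMl (ltW eps_gt0) (kkt_const_ge1 rho_gt0 Lfb_gt0 Xx).
have := compl_residual_le rho_gt0 Lfb_gt0 eps_gt0 Xx Yy1 Yz1 By2 Bz2 saddle_gap
  V_subgrad V_small s2_subgrad s2_small.
rewrite /compl_residual => residual.
have := vnorm_ge0 (pos_part (gb x z1)); have := vnorm_ge0 (pos_part (gb x y1)).
have := normr_ge0 (vdot y2 (gb x z1)); have := normr_ge0 (vdot (rho *: z2) (gb x y1)).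
move=> *; exists z1, rho, (rho *: z2), y2; split => //.
- by move=> i; rewrite mxE mulr_ge0 //; case/andP: (Bz2 i).
- by move=> i; case/andP: (By2 i).
split.
  move=> d d_gt0; have [V' V_subgrad' V'_small] := dist_xy d d_gt0.
  exists (row_mx (blk1 V') (blk2 V')).
    rewrite -[X in frechet_sub X]/(bilevel_lagrangian z1 (rho *: z2) y2).
    by rewrite bilevel_lagrangian_slice //; exact: frechet_sub_slice.
  by apply: le_trans (vnorm_blk12 V') (le_trans V'_small _); rewrite lerD2r.
split.
  apply: dist0_leW eps_le_C.
  have -> : (fun z => fbar x z + (vdot y2 (gb x z))%:E)%E = (ftilde x)^~ y2.
    by apply/funext => z; rewrite ftilde_box.
  exact: dist_z1.
do 2 (split; first lra).
split; last by split; lra.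
apply: le_trans (lower_level_gap Lfb_gt0 Xx Yy1 By2 saddle_gap) _.
by rewrite lee_fin.
Qed.

End BilevelReformulation.

Theorem lemma5p4 (R : realType) (n m l : nat)
    (f1 fb1 : 'rV[R]_n -> 'rV[R]_m -> R) (f2 : 'rV[R]_n -> \bar R)
    (fb2 : 'rV[R]_m -> \bar R) (gb : 'rV[R]_n -> 'rV[R]_m -> 'rV[R]_l)
    (Lf1 Lfb1 Lfb Lgg Lg G : R) :
  (* f2, fb2 proper closed convex; X1 = dom f2, Y1 = dom fb2 compact *)
  proper_fun f2 -> lsc_fun f2 -> convex_fun f2 ->
  proper_fun fb2 -> lsc_fun fb2 -> convex_fun fb2 ->
  compact (dom f2) -> compact (dom fb2) ->
  (* f1 is Lf1-smooth on X1 x Y1 *)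
  smooth_on (uncurry2 f1) (prod_set (dom f2) (dom fb2)) Lf1 ->
  (* fb1 convex in y1 and Lfb1-smooth *)
  (forall x, dom f2 x -> convex_fun (fun y => (fb1 x y)%:E)) ->
  smooth_on (uncurry2 fb1) (prod_set (dom f2) (dom fb2)) Lfb1 ->
  (* fbar is Lfb-Lipschitz on X1 x Y1 *)
  elipschitz_on (uncurry2 (fbar fb1 fb2)) (prod_set (dom f2) (dom fb2)) Lfb ->
  (* each gbar_i convex in y1; gbar Lgg-smooth and Lg-Lipschitz *)
  (forall (i : 'I_l) x, dom f2 x -> convex_fun (fun y => (gb x y ord0 i)%:E)) ->
  vsmooth_on (uncurry2 gb) (prod_set (dom f2) (dom fb2)) Lgg ->
  vlipschitz_on (uncurry2 gb) (prod_set (dom f2) (dom fb2)) Lg ->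
  (* Slater condition *)
  0 < G ->
  (forall x, dom f2 x -> exists2 yh, dom fb2 yh & forall i, gb x yh ord0 i <= - G) ->
  let B := 2 * Lfb * diam (dom fb2) / G in
  forall rho : R, 0 <= rho ->
  exists C : R,
  forall (eps : R) (x : 'rV[R]_n) (y1 : 'rV[R]_m) (y2 : 'rV[R]_l)
         (z1 : 'rV[R]_m) (z2 : 'rV[R]_l),
    0 < eps ->
    dom f2 x -> dom fb2 y1 -> box B y2 ->
    eps <= Num.min (rho * Lfb / 4) (rho * G * Num.sqrt l%:R / 4) ->
    ref_kkt f1 fb1 f2 fb2 gb B eps rho x y1 y2 z1 z2 ->
    bilevel_kkt f1 fb1 f2 fb2 gb (C * eps) x y1.
Proof.
move=> [f2_neqNy _] _ _ [fb2_neqNy _] _ _ X_compact Y_compact _ _ _ fbar_lip _ _ gb_lip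
  G_gt0 slater B rho _.
have [Mg Mg_ge0 gb_bounded] := compact_prod_vlipschitz_bounded X_compact Y_compact gb_lip.
exists (kkt_const l fb2 Lfb G rho Mg) => eps x y1 y2 z1 z2 eps_gt0 Xx Yy1 By2 eps_le.
apply: (bilevel_kkt_of_ref_kkt Mg_ge0 f2_neqNy fb2_neqNy Y_compact fbar_lip G_gt0 slater
  gb_bounded) => //.
by apply: le_trans eps_le _; rewrite ge_min lexx.
Qed.
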